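(* Let $m,n$ be positive integers, $0\le c\le 1$, and $f(\mathbf{z})=c\,\mathbf{z}\otimes(\mathbf{1}-\mathbf{z})$ for $\mathbf{z}\in\mathbb{R}^{m\times n}$. Fix integers $1\le T\le 3$ and $K^1,\dots,K^T\ge 1$. For an input $\mathbf{y}\in[0,1]^{m\times n}$ define the underexposure iteration as follows: $G_{\mathtt{u}}^{(1)}(\mathbf{y})=\mathbf{y}+f(\mathbf{y})$ and $\mathbf{x}_{\mathtt{u}}^{1,0}(\mathbf{y})=G_{\mathtt{u}}^{(1)}(\mathbf{y})$; for each block $t=1,\dots,T$ and $k=1,\dots,K^t$, $\mathbf{x}_{\mathtt{u}}^{t,k}(\mathbf{y})=G_{\mathtt{u}}^{(t)}(\mathbf{y})+f(\mathbf{x}_{\mathtt{u}}^{t,k-1}(\mathbf{y}))$; and for $t<T$, $G_{\mathtt{u}}^{(t+1)}(\mathbf{y})=\mathbf{x}_{\mathtt{u}}^{t,K^t}(\mathbf{y})$ and $\mathbf{x}_{\mathtt{u}}^{t+1,0}(\mathbf{y})=\mathbf{x}_{\mathtt{u}}^{t,K^t}(\mathbf{y})$. Define the overexposure iteration $\mathbf{x}_{\mathtt{o}}^{t,k}(\mathbf{y})$, $G_{\mathtt{o}}^{(t)}(\mathbf{y})$ identically but with every ''$+f$'' replaced by ''$-f$'' (i.e. $G_{\mathtt{o}}^{(1)}(\mathbf{y})=\mathbf{y}-f(\mathbf{y})$ and $\mathbf{x}_{\mathtt{o}}^{t,k}(\mathbf{y})=G_{\mathtt{o}}^{(t)}(\mathbf{y})-f(\mathbf{x}_{\mathtt{o}}^{t,k-1}(\mathbf{y}))$),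 with the same $c$, $T$, $K^t$. Then for every $\mathbf{y}\in[0,1]^{m\times n}$, every $t\in\{1,\dots,T\}$ and every $k\in\{1,\dots,K^t\}$, $$\mathbf{x}_{\mathtt{u}}^{t,k}(\mathbf{1}-\mathbf{y})=\mathbf{1}-\mathbf{x}_{\mathtt{o}}^{t,k}(\mathbf{y}).$$
   Context: $\otimes$ denotes element-wise multiplication and $\mathbf{1}$ the $m\times n$ all-ones matrix. The iteration is the paper's ''segmented shrinkage iterative scheme'' with $T$ built-in blocks, block $t$ having $K^t$ iterative steps $h^k_{\mathtt{u}}$ (resp. $h^k_{\mathtt{o}}$); the theorem states $h_{\mathtt{u}}^{k}(\mathbf{1}-\mathbf{y})=\mathbf{1}-h_{\mathtt{o}}^{k}(\mathbf{y})$ for each step in each block. *)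

From HB Require Import structures.
From mathcomp Require Import all_boot all_order all_algebra.
From mathcomp Require Import reals.
Set Implicit Arguments. Unset Strict Implicit. Unset Printing Implicit Defensive.
Import Order.TTheory GRing.Theory Num.Theory.
Local Open Scope ring_scope.

Definition ones (R : realType) (m n : nat) : 'M[R]_(m, n) := const_mx 1.

Definition fshr (R : realType) (m n : nat) (c : R) (z : 'M[R]_(m, n)) : 'M[R]_(m, n) :=
  \matrix_(i, j) (c * (z i j * (1 - z i j))).

(* Inner iteration within a block with sign s (s = 1 : "+f", s = -1 : "-f"):
   x^{.,0} = G, x^{.,k+1} = G + s f(x^{.,k}). *)
Fixpoint inner_iter (R : realType) (m n : nat) (c s : R) (G : 'M[R]_(m, n)) (k : nat)
  : 'M[R]_(m, n) :=
  match k with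
  | 0 => G
  | k'.+1 => G + s *: fshr c (inner_iter c s G k')
  end.

(* Gblk c s K y t = G^{(t+1)}(y)  (0-based block index t):
   G^{(1)}(y) = y + s f(y),  G^{(t+1)}(y) = x^{t,K^t}(y). *)
Fixpoint Gblk (R : realType) (m n : nat) (c s : R) (K : nat -> nat) (y : 'M[R]_(m, n))
  (t : nat) : 'M[R]_(m, n) :=
  match t with
  | 0 => y + s *: fshr c y
  | t'.+1 => inner_iter c s (Gblk c s K y t') (K t'.+1)
  end.

(* x^{t,k}(y) for block t >= 1 (paper indexing), step k. *)
Definition xiter (R : realType) (m n : nat) (c s : R) (K : nat -> nat) (y : 'M[R]_(m, n))
  (t k : nat) : 'M[R]_(m, n) :=
  inner_iter c s (Gblk c s K y t.-1) k.

Definition x_u (R : realType) (m n : nat) (c : R) K (y : 'M[R]_(m, n)) t k :=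
  xiter c 1 K y t k.
Definition x_o (R : realType) (m n : nat) (c : R) K (y : 'M[R]_(m, n)) t k :=
  xiter c (-1) K y t k.

From HB Require Import structures.
From mathcomp Require Import all_boot all_order all_algebra.
From mathcomp Require Import reals.
Import Order.TTheory GRing.Theory Num.Theory.
Local Open Scope ring_scope.

(* The reflection z |-> 1 - z leaves f(z) = c z (1 - z) invariant, so it turns
   a step G + s f(x) into 1 - (G' - s f(x')) for the reflected data G', x'.
   By induction on the inner step and then on the block, the whole scheme with
   sign s on 1 - y is the reflection of the scheme with sign -s on y. *)

Lemma fshr_onesB (R : realType) (m n : nat) (c : R) (z : 'M[R]_(m, n)) :
  fshr c (ones R m n - z) = fshr c z.
Proof.
apply/matrixP => i j; rewrite !mxE.
by rewrite opprB addrCA subrr addr0 [_ * (1 - _)]mulrC.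
Qed.

Lemma onesB_step (R : realType) (m n : nat) (c s : R) (G x : 'M[R]_(m, n)) :
  ones R m n - G + s *: fshr c (ones R m n - x) =
  ones R m n - (G + - s *: fshr c x).
Proof. by rewrite fshr_onesB scaleNr opprD opprK addrA. Qed.

Lemma inner_iter_onesB (R : realType) (m n : nat) (c s : R) (G : 'M[R]_(m, n)) k :
  inner_iter c s (ones R m n - G) k = ones R m n - inner_iter c (- s) G k.
Proof. by elim: k => [|k IHk] //=; rewrite IHk onesB_step. Qed.

Lemma Gblk_onesB (R : realType) (m n : nat) (c s : R) K (y : 'M[R]_(m, n)) t :
  Gblk c s K (ones R m n - y) t = ones R m n - Gblk c (- s) K y t.
Proof.
elim: t => [|t IHt] /=; first exact: onesB_step.
by rewrite IHt inner_iter_onesB.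
Qed.

Lemma xiter_onesB (R : realType) (m n : nat) (c s : R) K (y : 'M[R]_(m, n)) t k :
  xiter c s K (ones R m n - y) t k = ones R m n - xiter c (- s) K y t k.
Proof. by rewrite /xiter Gblk_onesB inner_iter_onesB. Qed.

Theorem theorem1 (R : realType) (m n : nat) (c : R) (T : nat) (K : nat -> nat)
  (y : 'M[R]_(m, n)) (t k : nat) :
  (0 < m)%N -> (0 < n)%N ->
  0 <= c <= 1 ->
  (1 <= T <= 3)%N ->
  (forall t', (1 <= t' <= T)%N -> (1 <= K t')%N) ->
  (forall i j, 0 <= y i j <= 1) ->
  (1 <= t <= T)%N -> (1 <= k <= K t)%N ->
  x_u c K (ones R m n - y) t k = ones R m n - x_o c K y t k.
Proof. by move=> *; rewrite /x_u xiter_onesB. Qed.
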